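(* Let $f:\mathbb{Z}_+^E\to\mathbb{R}_{\ge0}$ be non-negative and DR-submodular, $k$ a positive integer and $\alpha\in(0,1)$. Let $\mathbf{x},\mathbf{y}$ be the two vectors held by Algorithm FastDrSub$(f,E,k,\alpha)$ at the end of its main loop (step 3, before trimming). Let $\mathbf{o}$ be an optimal solution of the DrSMC problem and let $\mathbf{o}_1\in\mathbb{Z}_+^E$ be defined by $\mathbf{o}_1(e)=\mathbf{o}(e)$ if $\mathbf{o}(e)\le\alpha k$ and $\mathbf{o}_1(e)=0$ otherwise. Then $$f(\mathbf{o}_1\vee\mathbf{x})+f(\mathbf{o}_1\vee\mathbf{y})\le 4\big(f(\mathbf{x})+f(\mathbf{y})\big).$$
   Context: Notation: $E$ is a finite ground set of size $n$; $\mathbf{1}_e$ is the $e$-th unit vector; $\mathbf{x}\le\mathbf{y}$ is coordinatewise; $\vee,\wedge$ are coordinatewise max/min; $\|\mathbf{x}\|_1=\sum_{e}\mathbf{x}(e)$; $f(\mathbf{a}\mid\mathbf{b}):=f(\mathbf{a}+\mathbf{b})-f(\mathbf{b})$. $f$ is DR-submodular if $f(\mathbf{x}+\mathbf{1}_e)-f(\mathbf{x})\ge f(\mathbf{y}+\mathbf{1}_e)-f(\mathbf{y})$ for all $\mathbf{x}\le\mathbf{y}$ and $e\in E$. DrSMC problem: maximize $f(\mathbf{x})$ over $\mathbf{x}\in\mathbb{Z}_+^E$ subject to $\|\mathbf{x}\|_1\le k$ and $\mathbf{0}\le\mathbf{x}\le k\cdot\mathbf{1}$; $\mathsf{opt}$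 denotes its optimal value. Algorithm FastDrSub$(f,E,k,\alpha)$ (elements of $E$ are processed in a fixed order): 1. Compute $(d_{\max},e_{\max})\in\arg\max\{f(d\mathbf{1}_e): e\in E,\ d\in\mathbb{Z},\ \alpha k<d\le k\}$. 2. Set $\mathbf{x}\leftarrow\mathbf{0}$, $\mathbf{y}\leftarrow\mathbf{0}$. 3. For each $e\in E$ in order: let $d_{(\mathbf{x},e)}=\max\{d\in\mathbb{Z}: 0<d\le\alpha k,\ f(\mathbf{1}_e\mid\mathbf{x}+(d-1)\mathbf{1}_e)\ge f(\mathbf{x})/k\}$ and $d_{(\mathbf{y},e)}=\max\{d\in\mathbb{Z}: 0<d\le\alpha k,\ f(\mathbf{1}_e\mid\mathbf{y}+(d-1)\mathbf{1}_e)\ge f(\mathbf{y})/k\}$ (each computed by binary search on $d$, and taken to be $0$ if the set is empty). If $f(d_{(\mathbf{x},e)}\mathbf{1}_e\mid\mathbf{x})\ge f(d_{(\mathbf{y},e)}\mathbf{1}_e\mid\mathbf{y})$, set $\mathbf{x}\leftarrow\mathbf{x}+d_{(\mathbf{x},e)}\mathbf{1}_e$; otherwise set $\mathbf{y}\leftarrow\mathbf{y}+d_{(\mathbf{y},e)}\mathbf{1}_e$. 4. (Trimming) Let $e_1,e_2,\dots$ be the elements of $\{e:\mathbf{x}(e)>0\}$ listed in reverse order of their addition to $\mathbf{x}$ (most recent first) and $\mathbf{x}_t=\sum_{i=1}^t\mathbf{x}(e_i)\mathbf{1}_{e_i}$; let $\mathbf{x}'=\mathbf{x}_t$ for the largest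 $t$ with $\|\mathbf{x}_t\|_1\le k$. Define $\mathbf{y}'$ from $\mathbf{y}$ in the same way. 5. Return $\mathbf{z}\in\arg\max\{f(\mathbf{t}):\mathbf{t}\in\{\mathbf{x}',\mathbf{y}',d_{\max}\mathbf{1}_{e_{\max}}\}\}$. *)

From mathcomp Require Import all_boot all_order all_algebra.
Set Implicit Arguments. Unset Strict Implicit. Unset Printing Implicit Defensive.
Import Order.TTheory GRing.Theory Num.Theory.
Local Open Scope ring_scope.

Section Defs.
Variable E : finType.

Definition vec := {ffun E -> nat}.
Definition zerov : vec := [ffun _ => 0%N].
Definition unitv (e : E) : vec := [ffun a => nat_of_bool (a == e)].
Definition addv (x y : vec) : vec := [ffun a => (x a + y a)%N].
Definition scalev (d : nat) (x : vec) : vec := [ffun a => (d * x a)%N].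
Definition joinv (x y : vec) : vec := [ffun a => maxn (x a) (y a)].
Definition lev (x y : vec) : Prop := forall a, (x a <= y a)%N.
Definition norm1 (x : vec) : nat := (\sum_(a : E) x a)%N.

Variable R : realFieldType.

Definition marg (f : vec -> R) (a b : vec) : R := f (addv a b) - f b.

Definition DR_submodular (f : vec -> R) : Prop :=
  forall (x y : vec) (e : E), lev x y ->
    f (addv y (unitv e)) - f y <= f (addv x (unitv e)) - f x.

Definition feasible (k : nat) (x : vec) : Prop :=
  (norm1 x <= k)%N /\ forall a, (x a <= k)%N.
Definition optimal (f : vec -> R) (k : nat) (o : vec) : Prop :=
  feasible k o /\ forall z, feasible k z -> f z <= f o.

(* d_{(x,e)} : the largest integer d with 0 < d <= alpha k and
   f(1_e | x + (d-1) 1_e) >= f(x)/k; 0 if no such d (alpha < 1 so d < k+1). *)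
Definition dsel (f : vec -> R) (k : nat) (alpha : R) (x : vec) (e : E) : nat :=
  (\max_(d < k.+1 | (0 < (d : nat))%N && ((d : nat)%:R <= alpha * k%:R)%R
       && (f x / k%:R <= marg f (unitv e) (addv x (scalev (d : nat).-1 (unitv e))))%R)
     (d : nat))%N.

Definition step (f : vec -> R) (k : nat) (alpha : R) (xy : vec * vec) (e : E)
  : vec * vec :=
  let x := xy.1 in let y := xy.2 in
  let dx := dsel f k alpha x e in
  let dy := dsel f k alpha y e in
  if marg f (scalev dy (unitv e)) y <= marg f (scalev dx (unitv e)) x
  then (addv x (scalev dx (unitv e)), y)
  else (x, addv y (scalev dy (unitv e))).

Definition main_loop (f : vec -> R) (k : nat) (alpha : R) (s : seq E) : vec * vec :=
  foldl (step f k alpha) (zerov, zerov) s.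

Definition small_part (k : nat) (alpha : R) (o : vec) : vec :=
  [ffun a => if (o a)%:R <= alpha * k%:R then o a else 0%N].

End Defs.

From Pilot Require Import Defs.
From mathcomp Require Import all_boot all_order all_algebra.
From mathcomp Require Import zify lra.
Import Pilot.Defs.
Set Implicit Arguments. Unset Strict Implicit. Unset Printing Implicit Defensive.
Import Order.TTheory GRing.Theory Num.Theory.
Local Open Scope ring_scope.

(* Let gain m x a be the increase of f when coordinate a of x is raised to m.
   DR-submodularity gives f(o1 v x) - f(x) <= sum_a gain (o1 a) x a, and the
   gain at a coordinate can only drop while the other coordinates grow.  When
   the loop processes e and extends, say, x by d_(x,e) 1_e, maximality of
   d_(x,e) makes every further unit step on e gain less than f(x)/k, so the new
   x gains at most o1(e) f(x)/k on e; in the untouched y the gain on e is at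
   most f(y + d_(y,e) 1_e) - f(y) + o1(e) f(y)/k, and the selection rule bounds
   the first term by the increase f(x + d_(x,e) 1_e) - f(x).  Hence the summed
   gains of x and y stay below (1 + |o1|/k)(f x + f y) <= 2 (f x + f y), which
   yields the bound with 3 in place of 4. *)

Section VectorAlgebra.
Variable E : finType.
Implicit Types (x : vec E) (a : E).

Lemma addv_scale0 x a : addv x (scalev 0 (unitv a)) = x.
Proof. by apply/ffunP => b; rewrite !ffunE mul0n addn0. Qed.

Lemma addv_scaleD x a n m :
  addv (addv x (scalev n (unitv a))) (scalev m (unitv a))
  = addv x (scalev (n + m) (unitv a)).
Proof. by apply/ffunP => b; rewrite !ffunE mulnDl addnA. Qed.

Lemma addv_scaleS x a n :
  addv (addv x (scalev n (unitv a))) (unitv a) = addv x (scalev n.+1 (unitv a)).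
Proof. by apply/ffunP => b; rewrite !ffunE mulSn; lia. Qed.

Lemma lev_refl x : lev x x.
Proof. by []. Qed.

Lemma lev_addv_scale x a d : lev x (addv x (scalev d (unitv a))).
Proof. by move=> b; rewrite !ffunE leq_addr. Qed.

Definition raise_on (p : seq E) (w : E -> nat) x : vec E :=
  [ffun b => if b \in p then maxn (w b) (x b) else x b].

Lemma raise_on_nil w x : raise_on [::] w x = x.
Proof. by apply/ffunP => b; rewrite ffunE. Qed.

Lemma raise_on_cons p a w x : a \notin p ->
  raise_on (a :: p) w x = addv (raise_on p w x) (scalev (w a - x a) (unitv a)).
Proof.
move=> a_notin_p; apply/ffunP => b; rewrite !ffunE in_cons.
have [->|_] := eqVneq b a.
  by rewrite (negbTE a_notin_p) muln1 maxnC maxnE.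
by rewrite muln0 addn0.
Qed.

Lemma lev_raise_on p w x : lev x (raise_on p w x).
Proof. by move=> b; rewrite ffunE; case: ifP => // _; apply: leq_maxr. Qed.

Lemma joinv_raise_on p (o : vec E) x : (forall a, a \in p) ->
  joinv o x = raise_on p o x.
Proof. by move=> p_full; apply/ffunP => b; rewrite !ffunE p_full. Qed.

End VectorAlgebra.

Lemma telescope_le_natmul (R : numDomainType) (g : nat -> R) c lo hi :
  (lo <= hi)%N -> (forall i, (lo <= i < hi)%N -> g i.+1 - g i <= c) ->
  g hi - g lo <= (hi - lo)%:R * c.
Proof.
move=> lo_hi incr_le; rewrite -telescope_sumr // mulr_natl -sumr_const_nat.
exact: ler_sum_nat.
Qed.

Lemma telescope_nondecreasing (R : numDomainType) (g : nat -> R) lo hi :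
  (lo <= hi)%N -> (forall i, (lo <= i < hi)%N -> g i <= g i.+1) ->
  g lo <= g hi.
Proof.
move=> lo_hi incr_ge0; rewrite -subr_ge0 -telescope_sumr // big_nat.
by apply: sumr_ge0 => i /incr_ge0; rewrite subr_ge0.
Qed.

Section FastDrSub.
Variables (E : finType) (R : realFieldType) (f : vec E -> R).
Hypothesis f_DR : DR_submodular f.
Implicit Types (x y u v z : vec E) (a e : E).

Definition fray x a n := f (addv x (scalev n (unitv a))).

Lemma fray0 x a : fray x a 0 = f x.
Proof. by rewrite /fray addv_scale0. Qed.

Lemma fray_shift x a d n :
  fray (addv x (scalev d (unitv a))) a n = fray x a (d + n).
Proof. by rewrite /fray addv_scaleD. Qed.

Lemma marg_unit_fray x a n :
  marg f (unitv a) (addv x (scalev n (unitv a))) = fray x a n.+1 - fray x a n.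
Proof.
by rewrite /marg /fray; congr (f _ - _); apply/ffunP => b; rewrite !ffunE mulSn addnCA.
Qed.

Lemma marg_scale_fray x a d : marg f (scalev d (unitv a)) x = fray x a d - f x.
Proof. by rewrite /marg /fray; congr (f _ - _); apply/ffunP => b; rewrite !ffunE addnC. Qed.

Lemma fray_incr_antitone_base u v a n : lev u v ->
  fray v a n.+1 - fray v a n <= fray u a n.+1 - fray u a n.
Proof.
move=> le_uv; rewrite /fray -!addv_scaleS; apply: f_DR => b; rewrite !ffunE.
exact: leq_add.
Qed.

Lemma fray_incr_antitone u a t t' : (t <= t')%N ->
  fray u a t'.+1 - fray u a t' <= fray u a t.+1 - fray u a t.
Proof.
move=> le_tt'; rewrite /fray -!addv_scaleS; apply: f_DR => b; rewrite !ffunE.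
by rewrite leq_add // leq_mul.
Qed.

Lemma fray_gain_antitone u v a n : lev u v -> fray v a n - f v <= fray u a n - f u.
Proof.
move=> le_uv; rewrite -(fray0 u a) -(fray0 v a); elim: n => [|n IHn].
  by rewrite !subrr.
by have := fray_incr_antitone_base a n le_uv; lra.
Qed.

Definition gain m x a := fray x a (m - x a) - f x.

Lemma gain_antitone m x x' a : lev x x' -> x' a = x a -> gain m x' a <= gain m x a.
Proof. by move=> le_xx' eq_a; rewrite /gain eq_a; apply: fray_gain_antitone. Qed.

Lemma raise_on_gain_le (w : E -> nat) x p : uniq p ->
  f (raise_on p w x) - f x <= \sum_(a <- p) gain (w a) x a.
Proof.
elim: p => [|a p IHp]; first by rewrite raise_on_nil big_nil subrr.
rewrite cons_uniq big_cons => /andP[a_notin_p /IHp IHp'].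
have := fray_gain_antitone a (w a - x a) (lev_raise_on p w x).
rewrite raise_on_cons // /gain -[f (addv _ _)]/(fray _ a _).
by move: IHp'; lra.
Qed.

Definition potential (w : E -> nat) (s : seq E) x y : R :=
  \sum_(a <- s) (gain (w a) x a + gain (w a) y a).

Lemma potentialC w s x y : potential w s x y = potential w s y x.
Proof. by apply: eq_bigr => a _; rewrite addrC. Qed.

Lemma potential_antitone w s x x' y y' : lev x x' -> lev y y' ->
  {in s, forall a, x' a = x a /\ y' a = y a} ->
  potential w s x' y' <= potential w s x y.
Proof.
move=> le_xx' le_yy' eq_on_s; rewrite /potential big_seq_cond [X in _ <= X]big_seq_cond.
apply: ler_sum => a /andP[a_in _]; have [eq_x eq_y] := eq_on_s a a_in.
by apply: lerD; apply: gain_antitone.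
Qed.

Variables (k : nat) (alpha : R).
Hypotheses (f_ge0 : forall v, 0 <= f v) (k_gt0 : (0 < k)%N) (alpha_lt1 : alpha < 1).

Lemma threshold_ge0 z : 0 <= f z / k%:R.
Proof. by rewrite divr_ge0 ?ler0n. Qed.

Definition dsel_admissible z e (d : nat) : bool :=
  [&& (0 < d)%N, d%:R <= alpha * k%:R &
      f z / k%:R <= marg f (unitv e) (addv z (scalev d.-1 (unitv e)))].

Lemma dsel_spec z e :
  dsel f k alpha z e = 0%N \/ dsel_admissible z e (dsel f k alpha z e).
Proof.
apply: (big_ind (fun n => n = 0%N \/ dsel_admissible z e n)) => [|m n|i]; first by left.
- by rewrite /maxn; case: ifP.
- by rewrite /dsel_admissible -andbA; right.
Qed.

Lemma dsel_incr_ge z e i : (i < dsel f k alpha z e)%N ->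
  f z / k%:R <= fray z e i.+1 - fray z e i.
Proof.
have [->//|/and3P[d_gt0 _]] := dsel_spec z e; set d := dsel f k alpha z e.
rewrite marg_unit_fray (prednK d_gt0) => /le_trans le_thr lt_id; apply: le_thr.
have le_id : (i <= d.-1)%N by rewrite -ltnS (prednK d_gt0).
by have := fray_incr_antitone z e le_id; rewrite (prednK d_gt0).
Qed.

Lemma dsel_incr_lt z e i : (dsel f k alpha z e <= i)%N ->
  i.+1%:R <= alpha * k%:R -> fray z e i.+1 - fray z e i < f z / k%:R.
Proof.
move=> le_di succ_small; rewrite ltNge; apply/negP => incr_ge.
have lt_ik : (i.+1 < k.+1)%N.
  rewrite ltnS -(ler_nat R); apply: (le_trans succ_small).
  by rewrite ler_piMl ?ler0n // ltW.
have : (i.+1 <= dsel f k alpha z e)%N.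
  apply: (leq_bigmax_cond (F := fun d : 'I_k.+1 => nat_of_ord d) (Ordinal lt_ik)).
  by rewrite /= succ_small marg_unit_fray incr_ge.
by rewrite ltnNge le_di.
Qed.

Lemma fray_le_dsel z e t : (t <= dsel f k alpha z e)%N ->
  fray z e t <= fray z e (dsel f k alpha z e).
Proof.
move=> le_td; apply: telescope_nondecreasing => // i /andP[_ lt_id].
by rewrite -subr_ge0; apply: le_trans (dsel_incr_ge lt_id); apply: threshold_ge0.
Qed.

Lemma f_le_fray_dsel z e : f z <= fray z e (dsel f k alpha z e).
Proof. by rewrite -(fray0 z e); apply: fray_le_dsel. Qed.

Lemma fray_maxn_dsel_le z e m : m%:R <= alpha * k%:R ->
  fray z e (maxn (dsel f k alpha z e) m) - fray z e (dsel f k alpha z e)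
  <= m%:R * (f z / k%:R).
Proof.
set d := dsel f k alpha z e => m_small.
apply: (le_trans (telescope_le_natmul (g := fray z e) (c := f z / k%:R) (leq_maxl d m) _)).
- move=> i /andP[le_di lt_i_max]; apply/ltW/dsel_incr_lt => //.
  by apply: le_trans m_small; rewrite ler_nat; move: lt_i_max; rewrite /maxn; case: ifP; lia.
- by rewrite ler_wpM2r ?threshold_ge0 // ler_nat; lia.
Qed.

Lemma gain_step_le u v e m : u e = 0%N -> v e = 0%N -> m%:R <= alpha * k%:R ->
  marg f (scalev (dsel f k alpha v e) (unitv e)) v
    <= marg f (scalev (dsel f k alpha u e) (unitv e)) u ->
  gain m (addv u (scalev (dsel f k alpha u e) (unitv e))) e + gain m v e
  <= fray u e (dsel f k alpha u e) - f u + m%:R * (f u / k%:R) + m%:R * (f v / k%:R).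
Proof.
set du := dsel f k alpha u e; set dv := dsel f k alpha v e => ue0 ve0 m_small.
rewrite !marg_scale_fray => du_better.
have -> : gain m (addv u (scalev du (unitv e))) e = fray u e (maxn du m) - fray u e du.
  by rewrite /gain fray_shift !ffunE ue0 eqxx add0n muln1 maxnE.
have -> : gain m v e = fray v e m - f v by rewrite /gain ve0 subn0.
have le_v_max : fray v e m <= fray v e (maxn dv m).
  by have [le_m_dv|//] := leqP m dv; apply: fray_le_dsel.
have := fray_maxn_dsel_le u e m_small; have := fray_maxn_dsel_le v e m_small.
rewrite -/du -/dv; lra.
Qed.

Lemma potential_step (w : E -> nat) s u v e :
  (w e)%:R <= alpha * k%:R -> e \notin s -> u e = 0%N -> v e = 0%N ->
  marg f (scalev (dsel f k alpha v e) (unitv e)) v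
    <= marg f (scalev (dsel f k alpha u e) (unitv e)) u ->
  potential w s u v <= (1 + (\sum_(a <- s) w a)%:R / k%:R) * (f u + f v) ->
  potential w (rcons s e) (addv u (scalev (dsel f k alpha u e) (unitv e))) v
    <= (1 + (\sum_(a <- rcons s e) w a)%:R / k%:R)
       * (f (addv u (scalev (dsel f k alpha u e) (unitv e))) + f v).
Proof.
set u' := addv u _ => we_small e_notin_s ue0 ve0 du_better pot_uv.
have pot_mono : potential w s u' v <= potential w s u v.
  apply: potential_antitone; [exact: lev_addv_scale | exact: lev_refl |].
  move=> a a_in_s; have /negbTE neq_ae : a != e by apply: contraNneq e_notin_s => <-.
  by rewrite !ffunE neq_ae muln0 addn0.
rewrite /potential -cats1 !big_cat !big_seq1 /= -/(potential w s u' v) natrD.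
have step := gain_step_le ue0 ve0 we_small du_better.
have fu_le : f u <= f u' := f_le_fray_dsel u e.
set W := (\sum_(a <- s) w a)%:R in pot_uv *.
have coef_ge0 : 0 <= (W + (w e)%:R) / k%:R by rewrite divr_ge0 ?addr_ge0 ?ler0n.
have := ler_wpM2l coef_ge0 (lerD fu_le (lexx (f v))).
have fu'_eq : fray u e (dsel f k alpha u e) = f u' by [].
move: step pot_uv pot_mono; rewrite fu'_eq; lra.
Qed.

Lemma main_loop_notin s a : a \notin s ->
  (main_loop f k alpha s).1 a = 0%N /\ (main_loop f k alpha s).2 a = 0%N.
Proof.
elim/last_ind: s => [|s e IHs]; first by rewrite !ffunE.
rewrite mem_rcons in_cons negb_or => /andP[neq_ae /IHs].
rewrite /main_loop foldl_rcons -/(main_loop f k alpha s) /step.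
case: (main_loop f k alpha s) => x y /= [xa0 ya0].
by case: ifP => _ /=; rewrite !ffunE ?xa0 ?ya0 (negbTE neq_ae) muln0.
Qed.

Lemma potential_main_loop (w : E -> nat) s :
  (forall a, (w a)%:R <= alpha * k%:R) -> uniq s ->
  potential w s (main_loop f k alpha s).1 (main_loop f k alpha s).2
  <= (1 + (\sum_(a <- s) w a)%:R / k%:R)
     * (f (main_loop f k alpha s).1 + f (main_loop f k alpha s).2).
Proof.
move=> w_small; elim/last_ind: s => [_|s e IHs].
  by rewrite /potential !big_nil mul0r addr0 mul1r addr_ge0.
rewrite rcons_uniq => /andP[e_notin_s /IHs pot_s].
have [xe0 ye0] := main_loop_notin e_notin_s.
move: pot_s xe0 ye0; rewrite /main_loop foldl_rcons -/(main_loop f k alpha s) /step.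
case: (main_loop f k alpha s) => x y /= pot_xy xe0 ye0.
case: ifP => [dx_better|/negbT dy_better] /=; first exact: potential_step.
rewrite potentialC [f x + _]addrC; apply: potential_step => //.
- by rewrite ltW // ltNge.
- by rewrite potentialC [f y + _]addrC.
Qed.

End FastDrSub.

Theorem lemma3 (E : finType) (R : realFieldType) (f : vec E -> R)
  (k : nat) (alpha : R) (s : seq E) (o : vec E) :
  (forall v, 0 <= f v) ->
  DR_submodular f ->
  (0 < k)%N ->
  0 < alpha -> alpha < 1 ->
  uniq s -> (forall e, e \in s) ->
  optimal f k o ->
  let xy := main_loop f k alpha s in
  let o1 := small_part k alpha o in
  f (joinv o1 xy.1) + f (joinv o1 xy.2) <= 4%:R * (f xy.1 + f xy.2).
Proof.
move=> f_ge0 f_DR k_gt0 alpha_gt0 alpha_lt1 s_uniq s_full [[o_norm _] _] /=.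
set x := (main_loop f k alpha s).1; set y := (main_loop f k alpha s).2.
set o1 := small_part k alpha o.
have o1_small a : (o1 a)%:R <= alpha * k%:R.
  by rewrite ffunE; case: ifP => // _; rewrite mulr_ge0 ?ler0n ?ltW.
have o1_norm : ((\sum_(a <- s) o1 a)%:R / k%:R <= 1 :> R).
  rewrite ler_pdivrMr ?ltr0n // mul1r ler_nat big_uniq //.
  apply: leq_trans o_norm; rewrite /norm1 (eq_bigl xpredT) => [|a]; last by rewrite s_full.
  by apply: leq_sum => a _; rewrite ffunE; case: ifP.
have := potential_main_loop f_DR f_ge0 k_gt0 alpha_lt1 o1_small s_uniq.
rewrite /potential big_split /= -/x -/y.
have := raise_on_gain_le f_DR o1 x s_uniq; have := raise_on_gain_le f_DR o1 y s_uniq.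
rewrite !(joinv_raise_on _ _ s_full).
have := ler_wpM2r (addr_ge0 (f_ge0 x) (f_ge0 y)) o1_norm.
have := f_ge0 x; have := f_ge0 y; lra.
Qed.
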